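(* Let $\mathfrak{n}$ be a complex simple Lie algebra of type $C_n$ ($n\ge3$) and let $\mathfrak{n}=\mathfrak{n}_{-3}\oplus\cdots\oplus\mathfrak{n}_3$ be the $|3|$-grading associated to $\Sigma_i=\{\alpha_i,\alpha_n\}$, where $1\le i<n$. Then there is no graded isomorphism between $\mathfrak{F}_{r,3}$ and $\mathfrak{n}_{-3}\oplus\mathfrak{n}_{-2}\oplus\mathfrak{n}_{-1}$ (for any positive integer $r$).
   Context: Simple roots of $C_n$ are labeled in the standard way, with highest root $2\alpha_1+\cdots+2\alpha_{n-1}+\alpha_n$. For a root $\alpha=\sum a_l\alpha_l$ and a set $\Sigma$ of simple roots, $ht_\Sigma(\alpha)=\sum_{\alpha_l\in\Sigma}a_l$; the grading associated to $\Sigma$ is $\mathfrak{n}_m=\bigoplus_{ht_\Sigma(\alpha)=m}\mathfrak{g}_\alpha$ ($m\ne0$), $\mathfrak{n}_0=\mathfrak{h}\oplus\bigoplus_{ht_\Sigma(\alpha)=0}\mathfrak{g}_\alpha$, a $|3|$-grading since the highest root has $\Sigma_i$-height $3$. $\mathfrak{F}_{r,3}$ is the free nilpotent Lie algebra of step $3$ on $r$ generators with canonical grading $\mathfrak{f}_{-1}$ (span of generators), $\mathfrak{f}_{-2}=[\mathfrak{f}_{-1},\mathfrak{f}_{-1}]$, $\mathfrak{f}_{-3}=[\mathfrak{f}_{-1},\mathfrak{f}_{-2}]$; a graded isomorphism is a Lie algebra isomorphism mapping $\mathfrak{f}_{-m}$ onto $\mathfrak{n}_{-m}$ for $m=1,2,3$.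 *)

From HB Require Import structures.
From mathcomp Require Import all_boot all_order all_algebra.
From mathcomp Require Import reals complex.
Set Implicit Arguments. Unset Strict Implicit. Unset Printing Implicit Defensive.
Import Order.TTheory GRing.Theory Num.Theory.
Local Open Scope ring_scope.

Record lieAlgebra (K : fieldType) := LieAlgebra {
  lie_sort :> lmodType K;
  lie_br : lie_sort -> lie_sort -> lie_sort;
  lie_br_linl : forall (a : K) (x y z : lie_sort),
      lie_br (a *: x + y) z = a *: lie_br x z + lie_br y z;
  lie_br_linr : forall (a : K) (x y z : lie_sort),
      lie_br z (a *: x + y) = a *: lie_br z x + lie_br z y;
  lie_br_alt : forall x : lie_sort, lie_br x x = 0;
  lie_jacobi : forall x y z : lie_sort,
      lie_br x (lie_br y z) + lie_br y (lie_br z x) + lie_br z (lie_br x y) = 0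
}.

Definition nilpotent3 (K : fieldType) (L : lieAlgebra K) : Prop :=
  forall x y z w : L, lie_br x (lie_br y (lie_br z w)) = 0.

Definition lie_hom (K : fieldType) (L M : lieAlgebra K) (h : L -> M) : Prop :=
  (forall (a : K) (x y : L), h (a *: x + y) = a *: h x + h y) /\
  (forall x y : L, h (lie_br x y) = lie_br (h x) (h y)).

Definition free_nilpotent3 (K : fieldType) (r : nat) (L : lieAlgebra K)
    (iota : 'I_r -> L) : Prop :=
  nilpotent3 L /\
  forall (M : lieAlgebra K), nilpotent3 M -> forall g : 'I_r -> M,
    exists h : L -> M, [/\ lie_hom h, (forall j, h (iota j) = g j) &
      forall h' : L -> M, lie_hom h' -> (forall j, h' (iota j) = g j) ->
        forall x, h' x = h x].

Definition span (K : fieldType) (V : lmodType K) (S : V -> Prop) (v : V) : Prop :=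
  exists s : seq (K * V), (forall p, p \in s -> S p.2) /\
    v = \sum_(p <- s) p.1 *: p.2.

Definition fgr1 (K : fieldType) (r : nat) (L : lieAlgebra K) (iota : 'I_r -> L) :=
  span (fun v : L => exists j, v = iota j).
Definition fgr2 (K : fieldType) (r : nat) (L : lieAlgebra K) (iota : 'I_r -> L) :=
  span (fun v : L => exists x y, [/\ fgr1 iota x, fgr1 iota y & v = lie_br x y]).
Definition fgr3 (K : fieldType) (r : nat) (L : lieAlgebra K) (iota : 'I_r -> L) :=
  span (fun v : L => exists x y, [/\ fgr1 iota x, fgr2 iota y & v = lie_br x y]).
(* f_{-m} for m = 1, 2, 3 *)
Definition fgr (K : fieldType) (r : nat) (L : lieAlgebra K) (iota : 'I_r -> L)
    (m : nat) : L -> Prop :=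
  match m with 1 => fgr1 iota | 2 => fgr2 iota | 3 => fgr3 iota | _ => fun _ => False end.

(* The simple Lie algebra of type C_n: sp(2n, C), C = R[i]             *)
Section Cn.
Variable (R : realType).
Local Notation C := (complex R).

Definition Jmx (n : nat) : 'M[C]_(n + n) := block_mx 0 1%:M (- 1%:M) 0.

Definition in_sp (n : nat) (X : 'M[C]_(n + n)) : Prop :=
  X^T *m Jmx n + Jmx n *m X = 0.

Definition lie_comm (n : nat) (X Y : 'M[C]_(n + n)) : 'M[C]_(n + n) :=
  X *m Y - Y *m X.

(* Cartan subalgebra h: the diagonal matrices diag(d, -d); a linear form on h
   is identified with its coefficient vector a, via  D(d) |-> sum_k a_k d_k. *)
Definition cartan (n : nat) (d : 'rV[C]_n) : 'M[C]_(n + n) :=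
  diag_mx (row_mx d (- d)).

Definition root_space (n : nat) (a : 'rV[C]_n) (X : 'M[C]_(n + n)) : Prop :=
  in_sp X /\ forall d : 'rV[C]_n,
    lie_comm (cartan d) X = (\sum_(k < n) a 0 k * d 0 k) *: X.

Definition is_root (n : nat) (a : 'rV[C]_n) : Prop :=
  a != 0 /\ exists X, X != 0 /\ root_space a X.

(* simple roots, standard labelling 1..n:
   alpha_l = e_l - e_{l+1} (1 <= l < n), alpha_n = 2 e_n,
   highest root 2 e_1 = 2 alpha_1 + ... + 2 alpha_{n-1} + alpha_n *)
Definition simple_root (n l : nat) : 'rV[C]_n :=
  \row_(k < n)
    (if (l < n)%N then (k.+1 == l)%:R - (k.+1 == l.+1)%:R
     else if (l == n)%N then (k.+1 == n)%:R *+ 2 else 0).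

(* ht_Sigma(a) = m, where a = sum_l c_l alpha_l (unique expansion) *)
Definition ht_is (n : nat) (Sigma : seq nat) (a : 'rV[C]_n) (m : int) : Prop :=
  exists c : nat -> C,
    a = \sum_(1 <= l < n.+1) c l *: simple_root n l /\
    \sum_(1 <= l < n.+1 | l \in Sigma) c l = m%:~R.

Definition gpiece (n : nat) (Sigma : seq nat) (m : int) (X : 'M[C]_(n + n)) : Prop :=
  exists s : seq ('rV[C]_n * 'M[C]_(n + n)),
    (forall p, p \in s -> [/\ is_root p.1, ht_is Sigma p.1 m & root_space p.1 p.2])
    /\ X = \sum_(p <- s) p.2.

Definition neg_part (n : nat) (Sigma : seq nat) (X : 'M[C]_(n + n)) : Prop :=
  exists X1 X2 X3, [/\ gpiece Sigma (-1) X1, gpiece Sigma (-2) X2,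
    gpiece Sigma (-3) X3 & X = X1 + X2 + X3].

Definition graded_iso (n : nat) (Sigma : seq nat) (r : nat) (F : lieAlgebra C)
    (iota : 'I_r -> F) (phi : F -> 'M[C]_(n + n)) : Prop :=
  [/\ (forall (a : C) (x y : F), phi (a *: x + y) = a *: phi x + phi y),
      (forall x y : F, phi (lie_br x y) = lie_comm (phi x) (phi y)),
      injective phi,
      (forall X, neg_part Sigma X <-> exists x, phi x = X) &
      (forall m : nat, (1 <= m <= 3)%N -> forall X,
          gpiece Sigma (- (m%:Z)) X <-> exists x, fgr iota m x /\ phi x = X)].

End Cn.

From mathcomp Require Import all_boot all_order all_algebra.
From mathcomp Require Import reals complex.
From mathcomp Require Import zify.
Set Implicit Arguments. Unset Strict Implicit. Unset Printing Implicit Defensive.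
Import Order.TTheory GRing.Theory Num.Theory.
Local Open Scope ring_scope.

(* The matrices X = E_{n,1} and Y = E_{i+1,i}, embedded in sp(2n) as
   diag(A, -A^T), are root vectors for the roots e_n - e_1 and e_{i+1} - e_i,
   both of Sigma_i-height -1; they commute, and for n >= 3 they are linearly
   independent.  In the free nilpotent algebra, however, two commuting elements
   of f_{-1} are proportional: map it onto the step-2 algebra K^r + M_r(K) with
   bracket [(u, _), (v, _)] = (0, u^T v - v^T u); there [x, y] = 0 forces the
   coordinate vectors u, v of x, y to satisfy u_k v_l = v_k u_l.  So the
   preimages of X and Y cannot exist in f_{-1}. *)

Section LinearFun.
Variables (K : fieldType) (U V : lmodType K) (f : U -> V).
Hypothesis f_lin : linear f.

Lemma linear_fun0 : f 0 = 0.
Proof.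
have := f_lin 1 0 0; rewrite !scale1r addr0 => /esym /eqP.
by rewrite -[X in _ == X]add0r (inj_eq (addIr _)) => /eqP.
Qed.

Lemma linear_funD x y : f (x + y) = f x + f y.
Proof. by have := f_lin 1 x y; rewrite !scale1r. Qed.

Lemma linear_funZ a x : f (a *: x) = a *: f x.
Proof. by have := f_lin a x 0; rewrite !addr0 linear_fun0 addr0. Qed.

End LinearFun.

Lemma sum_nat_indicator (T : pzSemiRingType) (a b t : nat) (G : nat -> T) :
  \sum_(a <= l < b) G l * (t == l)%:R = if (a <= t < b)%N then G t else 0.
Proof.
under eq_bigr do rewrite mulr_natr mulrb eq_sym.
by rewrite -big_mkcond big_nat1_eq.
Qed.

Lemma sum_mem_pair (V : nmodType) (n i : nat) (c : nat -> V) : (1 <= i < n)%N ->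
  \sum_(1 <= l < n.+1 | l \in [:: i; n]) c l = c i + c n.
Proof.
move=> /andP[i_gt0 ltin]; rewrite (bigID (pred1 i)) /=; congr (_ + _).
  rewrite (eq_bigl (pred1 i)) ?big_nat1_eq ?i_gt0 ?ltnS ?(ltnW ltin) // => l /=.
  by rewrite !inE; case: (l == i); rewrite ?andbF.
rewrite (eq_bigl (pred1 n)) ?big_nat1_eq ?ltnS ?leqnn ?andbT; last first.
  move=> l /=; rewrite !inE.
  by case: (eqVneq l n) => [->|_]; rewrite ?(gtn_eqF ltin) ?orbF ?andbN.
by rewrite (leq_ltn_trans (leq0n i) ltin).
Qed.

Section SymplecticRootVectors.
Variable R : realType.
Local Notation C := (complex R).
Variable n : nat.

Definition sp_of_gl (A : 'M[C]_n) : 'M[C]_(n + n) := block_mx A 0 0 (- A^T).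

Definition ediff (k j : 'I_n) : 'rV[C]_n := \row_m ((m == k)%:R - (m == j)%:R).

Lemma mul_block_diag (A B A' B' : 'M[C]_n) :
  block_mx A 0 0 B *m block_mx A' 0 0 B' = block_mx (A *m A') 0 0 (B *m B').
Proof. by rewrite mulmx_block !mulmx0 !mul0mx !addr0 !add0r. Qed.

Lemma sp_of_gl_in_sp A : in_sp (sp_of_gl A).
Proof.
rewrite /in_sp /sp_of_gl /Jmx tr_block_mx !trmx0 linearN /= trmxK.
rewrite !mulmx_block !mulmx0 !mul0mx !addr0 !add0r !mulmx1 !mul1mx.
rewrite !mulmxN !mulNmx !mulmx1 !mul1mx opprK add_block_mx.
by rewrite !addr0 !subrr block_mx0.
Qed.

Lemma lie_comm_sp_of_gl A B :
  lie_comm (sp_of_gl A) (sp_of_gl B) = sp_of_gl (A *m B - B *m A).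
Proof.
rewrite /lie_comm /sp_of_gl !mul_block_diag opp_block_mx add_block_mx.
rewrite !oppr0 !addr0; congr block_mx.
by rewrite !mulmxN !mulNmx !opprK linearB /= !trmx_mul opprB.
Qed.

Lemma lie_comm_sp_of_gl_delta (k j k' j' : 'I_n) : j != k' -> j' != k ->
  lie_comm (sp_of_gl (delta_mx k j)) (sp_of_gl (delta_mx k' j')) = 0.
Proof.
move=> /negbTE jk' /negbTE j'k.
rewrite lie_comm_sp_of_gl !mul_delta_mx_cond jk' j'k !mulr0n subrr.
by rewrite /sp_of_gl trmx0 oppr0 block_mx0.
Qed.

Lemma sp_of_gl_delta_ul (k j k' j' : 'I_n) :
  sp_of_gl (delta_mx k j) (lshift n k') (lshift n j') = ((k' == k) && (j' == j))%:R.
Proof. by rewrite /sp_of_gl block_mxEul mxE. Qed.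

Lemma sp_of_gl_delta_neq0 (k j : 'I_n) : sp_of_gl (delta_mx k j) != 0.
Proof.
apply/eqP => /matrixP /(_ (lshift n k) (lshift n j)).
by rewrite sp_of_gl_delta_ul mxE !eqxx => /eqP; rewrite oner_eq0.
Qed.

Lemma sp_of_gl_delta_neq_scale (k j k' j' : 'I_n) (a : C) : (k, j) != (k', j') ->
  sp_of_gl (delta_mx k j) != a *: sp_of_gl (delta_mx k' j').
Proof.
move=> kj; apply/eqP => /matrixP /(_ (lshift n k) (lshift n j)).
rewrite sp_of_gl_delta_ul mxE sp_of_gl_delta_ul !eqxx -xpair_eqE (negbTE kj).
by rewrite mulr0 => /eqP; rewrite oner_eq0.
Qed.

Lemma sum_ediff (k j : 'I_n) (d : 'rV[C]_n) :
  \sum_(m < n) ediff k j 0 m * d 0 m = d 0 k - d 0 j.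
Proof.
under eq_bigr do rewrite mxE mulrBl !mulr_natl !mulrb.
by rewrite sumrB -!big_mkcond !big_pred1_eq.
Qed.
(* With 0-based k and j this reads
   e_{k+1} - e_{j+1} = -(alpha_{j+1} + ... + alpha_k). *)
Lemma ediff_simple_roots (k j : 'I_n) : (j < k)%N ->
  ediff k j = \sum_(1 <= l < n.+1) (- ((j < l <= k)%N)%:R) *: simple_root R n l.
Proof.
move=> jk; have kn := ltn_ord k; have n_gt0 := leq_ltn_trans (leq0n k) kn.
apply/matrixP => z m; rewrite ord1 summxE big_nat_recr //=.
have -> : (j < n <= k)%N = false by rewrite (leqNgt n k) kn andbF.
rewrite mulr0n oppr0 scale0r [X in _ + X]mxE addr0.
under eq_big_nat => l /andP[_ ln] do rewrite !mxE ln eqSS mulrBr.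
rewrite sumrB !sum_nat_indicator /= ltn_ord andbT.
have -> : (if (m.+1 < n)%N then - (j < m.+1 <= k)%N%:R else 0)
          = - (j < m.+1 <= k)%N%:R :> C.
  case: ifP => // mn; suff -> : (j < m.+1 <= k)%N = false by rewrite mulr0n oppr0.
  lia.
have -> : (if (0 < m)%N then - (j < m <= k)%N%:R else 0)
          = - (j < m <= k)%N%:R :> C.
  case: ifP => // m0; suff -> : (j < m <= k)%N = false by rewrite mulr0n oppr0.
  lia.
rewrite mxE -!val_eqE /=.
case: (eqVneq (m : nat) k) => [->|mk].
  have [-> ->] : (j < k.+1 <= k)%N = false /\ (j < k <= k)%N by split; lia.
  by rewrite (gtn_eqF jk) /= !oppr0 addr0 sub0r opprK.
case: (eqVneq (m : nat) j) => [->|mj].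
  have [-> ->] : (j < j.+1 <= k)%N /\ (j < j <= k)%N = false by split; lia.
  by rewrite /= !oppr0 addr0 add0r.
have -> : (j < m.+1 <= k)%N = (j < m <= k)%N by lia.
by rewrite !subrr.
Qed.

Lemma sp_of_gl_delta_root_space (k j : 'I_n) :
  root_space (ediff k j) (sp_of_gl (delta_mx k j)).
Proof.
split; first exact: sp_of_gl_in_sp.
move=> d; rewrite sum_ediff /lie_comm /cartan diag_mx_row /sp_of_gl.
rewrite !mul_block_diag opp_block_mx add_block_mx !oppr0 !addr0.
rewrite scale_block_mx scaler0.
congr block_mx; apply/matrixP => p q; rewrite ?mul_diag_mx ?mul_mx_diag !mxE.
  case: (eqVneq p k) => [->|_]; case: (eqVneq q j) => [->|_] /=;
  by rewrite ?mulr1 ?mul1r ?mulr0 ?mul0r ?subr0.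
case: (eqVneq p j) => [->|_]; case: (eqVneq q k) => [->|_] /=;
  rewrite ?andbF ?andbT /= ?mulr0n ?oppr0 ?mulr0 ?mul0r ?subr0 //.
by rewrite !mulrN1 mulN1r !opprK opprB.
Qed.

Lemma ediff_is_root (k j : 'I_n) : k != j -> is_root (ediff k j).
Proof.
move=> kj; split.
  apply/eqP => /matrixP /(_ 0 k); rewrite !mxE eqxx (negbTE kj) subr0 => /eqP.
  by rewrite oner_eq0.
exists (sp_of_gl (delta_mx k j)).
by split; [exact: sp_of_gl_delta_neq0 | exact: sp_of_gl_delta_root_space].
Qed.

Lemma gpiece_sp_of_gl_delta (Sigma : seq nat) (m : int) (k j : 'I_n) : k != j ->
  ht_is Sigma (ediff k j) m -> gpiece Sigma m (sp_of_gl (delta_mx k j)).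
Proof.
move=> kj ht; exists [:: (ediff k j, sp_of_gl (delta_mx k j))].
split; last by rewrite big_seq1.
move=> p; rewrite inE => /eqP -> /=.
by split; [exact: ediff_is_root | exact: ht | exact: sp_of_gl_delta_root_space].
Qed.

Lemma ht_is_ediff (Sigma : seq nat) (m : int) (k j : 'I_n) : (j < k)%N ->
  \sum_(1 <= l < n.+1 | l \in Sigma) - ((j < l <= k)%N)%:R = m%:~R :> C ->
  ht_is Sigma (ediff k j) m.
Proof.
move=> jk htm; exists (fun l => - ((j < l <= k)%N)%:R).
by rewrite -ediff_simple_roots.
Qed.

Lemma gpiece_neg1_sp_of_gl_delta (i : nat) (k j : 'I_n) :
  (1 <= i < n)%N -> (j < i <= k)%N ->
  gpiece [:: i; n] (- 1%:Z) (sp_of_gl (delta_mx k j)).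
Proof.
move=> lti jik; have jk : (j < k)%N by lia.
apply: gpiece_sp_of_gl_delta; first by rewrite -val_eqE gtn_eqF.
apply: ht_is_ediff => //; rewrite sum_mem_pair // jik.
have -> : (j < n <= k)%N = false by have := ltn_ord k; lia.
by rewrite mulr0n oppr0 addr0.
Qed.
End SymplecticRootVectors.

Section StepTwo.
Variables (K : fieldType) (r : nat).

Definition step2_br (u v : 'rV[K]_r * 'M[K]_r) : 'rV[K]_r * 'M[K]_r :=
  (0, u.1^T *m v.1 - v.1^T *m u.1).

Lemma step2_br_linl (a : K) x y z :
  step2_br (a *: x + y) z = a *: step2_br x z + step2_br y z.
Proof.
rewrite /step2_br; apply/eqP; rewrite xpair_eqE /= scaler0 addr0 eqxx /=.
apply/eqP; rewrite !linearD !linearZ /= ?mulmxDl ?mulmxDr -?scalemxAl -?scalemxAr.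
by rewrite addrACA.
Qed.

Lemma step2_br_linr (a : K) x y z :
  step2_br z (a *: x + y) = a *: step2_br z x + step2_br z y.
Proof.
rewrite /step2_br; apply/eqP; rewrite xpair_eqE /= scaler0 addr0 eqxx /=.
apply/eqP; rewrite !linearD !linearZ /= ?mulmxDl ?mulmxDr -?scalemxAl -?scalemxAr.
by rewrite opprD scalerN addrACA.
Qed.

Lemma step2_br_alt x : step2_br x x = 0.
Proof. by rewrite /step2_br subrr. Qed.

Lemma step2_br_br x y z : step2_br x (step2_br y z) = 0.
Proof. by rewrite /step2_br /= trmx0 mulmx0 mul0mx subrr. Qed.

Lemma step2_br_jacobi x y z :
  step2_br x (step2_br y z) + step2_br y (step2_br z x)
    + step2_br z (step2_br x y) = 0.
Proof. by rewrite !step2_br_br !addr0. Qed.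

Definition step2_lie : lieAlgebra K :=
  LieAlgebra step2_br_linl step2_br_linr step2_br_alt step2_br_jacobi.

Lemma step2_lie_nilpotent3 : nilpotent3 step2_lie.
Proof. by move=> x y z w /=; rewrite step2_br_br. Qed.

End StepTwo.

Section DegreeOne.
Variables (K : fieldType) (r : nat) (F : lieAlgebra K) (iota : 'I_r -> F).
Variable h : F -> step2_lie K r.
Hypothesis h_hom : lie_hom h.
Hypothesis h_iota : forall j, h (iota j) = (delta_mx 0 j, 0).

Lemma fgr1_coord_expansion z :
  fgr1 iota z -> z = \sum_(j < r) (h z).1 0 j *: iota j.
Proof.
have [h_lin _] := h_hom.
case=> s [gen_s ->]; elim: s gen_s => [|p s IHs] gen_s.
  by rewrite big_nil linear_fun0 // big1 // => j _; rewrite mxE scale0r.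
have [j Ej] := gen_s p (mem_head _ _).
rewrite big_cons linear_funD // linear_funZ // Ej h_iota.
under [RHS]eq_bigr do rewrite !mxE scalerDl.
rewrite big_split /= -IHs => [|q qs]; last by apply: gen_s; rewrite inE qs orbT.
congr (_ + _); rewrite (bigD1 j) //= eqxx mulr1 big1 ?addr0 // => k /negbTE kj.
by rewrite kj mulr0 scale0r.
Qed.

Lemma fgr1_commute_proportional x y : fgr1 iota x -> fgr1 iota y ->
  lie_br x y = 0 -> x = 0 \/ exists a : K, y = a *: x.
Proof.
move=> fx fy xy; have [h_lin h_br] := h_hom.
have coord_sym k l : (h x).1 0 k * (h y).1 0 l = (h y).1 0 k * (h x).1 0 l.
  have := h_br x y; rewrite xy linear_fun0 // => /(congr1 snd) /= /esym /eqP.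
  rewrite subr_eq0 => /eqP /matrixP /(_ k l).
  by rewrite !mxE !big_ord1 !mxE.
have [k xk_neq0 | x_coord0] := pickP (fun k => (h x).1 0 k != 0).
  right; pose a := (h y).1 0 k / (h x).1 0 k; exists a.
  rewrite {1}(fgr1_coord_expansion fy) {1}(fgr1_coord_expansion fx) scaler_sumr.
  apply: eq_bigr => l _; rewrite scalerA; congr (_ *: _).
  by apply: (mulfI xk_neq0); rewrite coord_sym /a mulrA mulrCA mulfV // mulr1.
left; rewrite (fgr1_coord_expansion fx) big1 // => l _.
by move/negbFE/eqP: (x_coord0 l) => ->; rewrite scale0r.
Qed.

End DegreeOne.

Lemma free_nilpotent3_fgr1_commute (K : fieldType) (r : nat) (F : lieAlgebra K)
    (iota : 'I_r -> F) (x y : F) :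
  free_nilpotent3 iota -> fgr1 iota x -> fgr1 iota y ->
  lie_br x y = 0 -> x = 0 \/ exists a : K, y = a *: x.
Proof.
case=> _ univ; have [h [h_hom h_iota _]] :=
  univ (step2_lie K r) (@step2_lie_nilpotent3 K r) (fun j => (delta_mx 0 j, 0)).
exact: (fgr1_commute_proportional h_hom h_iota).
Qed.

Unset Implicit Arguments.
Theorem theorem4p7 (R : realType) (n i : nat) :
  (3 <= n)%N -> (1 <= i < n)%N ->
  forall (r : nat), (0 < r)%N ->
  forall (F : lieAlgebra (complex R)) (iota : 'I_r -> F),
    free_nilpotent3 iota ->
    ~ exists phi : F -> 'M[complex R]_(n + n),
        graded_iso [:: i; n] iota phi.
Proof.
move=> n_ge3 lti r _ F iota free_F [phi [phi_lin phi_br phi_inj _ phi_gr]].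
have /andP[_ ltin] := lti.
have ltn1n : (n.-1 < n)%N by lia.
have lt0n : (0 < n)%N by lia.
have lti1n : (i.-1 < n)%N by lia.
pose kX := Ordinal ltn1n; pose jX := Ordinal lt0n.
pose kY := Ordinal ltin; pose jY := Ordinal lti1n.
have gX : gpiece [:: i; n] (- 1%:Z) (sp_of_gl (delta_mx kX jX : 'M[complex R]_n)).
  by apply: gpiece_neg1_sp_of_gl_delta => //=; lia.
have [x [fx eX]] := (phi_gr 1%N erefl _).1 gX.
have gY : gpiece [:: i; n] (- 1%:Z) (sp_of_gl (delta_mx kY jY : 'M[complex R]_n)).
  by apply: gpiece_neg1_sp_of_gl_delta => //=; lia.
have [y [fy eY]] := (phi_gr 1%N erefl _).1 gY.
have xy : lie_br x y = 0.
  apply: phi_inj; rewrite phi_br eX eY linear_fun0 //.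
  by apply: lie_comm_sp_of_gl_delta; rewrite -val_eqE /=; lia.
have [x0 | [a y_ax]] := free_nilpotent3_fgr1_commute free_F fx fy xy.
  by have := sp_of_gl_delta_neq0 R kX jX; rewrite -eX x0 linear_fun0 ?eqxx.
have YX : (kY, jY) != (kX, jX) by rewrite xpair_eqE -!val_eqE /=; lia.
by have := sp_of_gl_delta_neq_scale a YX; rewrite -eY -eX y_ax linear_funZ ?eqxx.
Qed.
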